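(* Let $T$ be a doubly substochastic operator. Then $F_T(x,y):=\int_0^xT\mathbf{1}_{[0,y]}(s)\,ds$, $(x,y)\in\mathbb{R}_+^2$, is a bivariate subdistribution function. If $T$ is additionally equivariant, then $F_T$ is a bivariate tail dependence function, i.e. $F_T(\mathbf{w})=\lim_{s\searrow0}C(s\mathbf{w})/s$ for all $\mathbf{w}\in\mathbb{R}_+^2$ for some $2$-copula $C$.
   Context: $\mathbb{R}_+=[0,\infty)$ with Lebesgue measure; $L^1(\mathbb{R}_+)+L^\infty(\mathbb{R}_+):=\{f+g: f\in L^1(\mathbb{R}_+),g\in L^\infty(\mathbb{R}_+)\}$. A linear operator $T:L^1(\mathbb{R}_+)+L^\infty(\mathbb{R}_+)\to L^1(\mathbb{R}_+)+L^\infty(\mathbb{R}_+)$ is doubly substochastic if (i) $Tf\ge0$ whenever $f\ge0$; (ii) $T(L^1)\subset L^1$ and $T(L^\infty)\subset L^\infty$; (iii) $\|Tf\|_1\le\|f\|_1$ for $f\in L^1$ and $\|Tg\|_\infty\le\|g\|_\infty$ for $g\in L^\infty$; (iv) $Tf=\sup_nTf_n$ whenever $f_n\in L^1\cap L^\infty$, $f\in L^\infty$ and $f_n\nearrow f$. $T$ is equivariant if $T(f\circ\sigma)=(Tf)\circ\sigma$ for all dilations $\sigma(x)=x/s$, $s>0$. A function $F:\mathbb{R}_+^d\to\mathbb{R}_+$ is a subdistribution function if it is nonnegative, $d$-increasing, bounded above by $\min_iw_i$, and Lipschitz with constant $1$ (i.e. $|F(\mathbf{x})-F(\mathbf{y})|\le\sum_i|x_i-y_i|$).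 A bivariate tail dependence function is one of the form $\mathbf{w}\mapsto\lim_{s\searrow0}C(s\mathbf{w})/s$ for a $2$-copula $C$; equivalently, a positively homogeneous (of order $1$) subdistribution function. *)

(* R : realType, Lebesgue measure on R, functions on
   R_+ represented by functions R -> R considered on [set x | 0 <= x]. *)
From HB Require Import structures.
From mathcomp Require Import all_boot all_order all_algebra.
From mathcomp Require Import all_classical all_reals all_analysis.
Set Implicit Arguments. Unset Strict Implicit. Unset Printing Implicit Defensive.
Import Order.TTheory GRing.Theory Num.Theory.
Import numFieldNormedType.Exports.
Local Open Scope classical_set_scope.
Local Open Scope ring_scope.

Section Defs.
Variable R : realType.
Local Notation mu := (@lebesgue_measure R).

Definition Rnonneg : set R := [set x | 0 <= x].

Definition aeeq (f g : R -> R) : Prop :=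
  {ae mu, forall x, Rnonneg x -> f x = g x}.

Definition inL1 (f : R -> R) : Prop :=
  measurable_fun Rnonneg f /\ mu.-integrable Rnonneg (EFin \o f).

(* f is in L^oo(R_+), with |f| <= M a.e. expressing ||f||_oo <= M *)
Definition ae_bounded_by (f : R -> R) (M : R) : Prop :=
  {ae mu, forall x, Rnonneg x -> `|f x| <= M}.

Definition inLinf (f : R -> R) : Prop :=
  measurable_fun Rnonneg f /\ exists M, ae_bounded_by f M.

Definition inL1Linf (f : R -> R) : Prop :=
  measurable_fun Rnonneg f /\
  exists g h, [/\ inL1 g, inLinf h & aeeq f (g \+ h)].

Definition L1norm (f : R -> R) : \bar R :=
  (\int[mu]_(x in Rnonneg) (`|f x|)%:E)%E.

(* T : L^1 + L^oo -> L^1 + L^oo is a doubly substochastic linear operator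
   (acting on representatives, compatibly with a.e. equality). *)
Definition doubly_substochastic (T : (R -> R) -> (R -> R)) : Prop :=
      (forall f, inL1Linf f -> inL1Linf (T f)) /\
      (forall f g, inL1Linf f -> inL1Linf g -> aeeq f g -> aeeq (T f) (T g)) /\
      (forall f g (a b : R), inL1Linf f -> inL1Linf g ->
         aeeq (T (fun x => a * f x + b * g x))
              (fun x => a * T f x + b * T g x)) /\
      (forall f, inL1Linf f -> {ae mu, forall x, Rnonneg x -> 0 <= f x} ->
         {ae mu, forall x, Rnonneg x -> 0 <= T f x}) /\
      ((forall f, inL1 f -> inL1 (T f)) /\ (forall g, inLinf g -> inLinf (T g))) /\
      ((forall f, inL1 f -> (L1norm (T f) <= L1norm f)%E) /\
      (forall g M, inLinf g -> ae_bounded_by g M -> ae_bounded_by (T g) M)) /\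
      (forall (fs : nat -> R -> R) (f : R -> R),
         (forall n, inL1 (fs n) /\ inLinf (fs n)) -> inLinf f ->
         {ae mu, forall x, Rnonneg x ->
            (forall n, fs n x <= fs n.+1 x) /\ fs n x @[n --> \oo] --> f x} ->
         {ae mu, forall x, Rnonneg x ->
            ereal_sup [set (T (fs n) x)%:E | n in [set: nat]] = (T f x)%:E}).

Definition equivariant (T : (R -> R) -> (R -> R)) : Prop :=
  forall (s : R) (f : R -> R), 0 < s -> inL1Linf f ->
    aeeq (T (fun x => f (x / s))) (fun x => T f (x / s)).

Definition F_T (T : (R -> R) -> (R -> R)) (x y : R) : R :=
  Rintegral mu `[0, x] (T \1_`[0, y]).

Definition subdistribution2 (F : R -> R -> R) : Prop :=
  [/\ (forall x y, 0 <= x -> 0 <= y -> 0 <= F x y),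
      (forall x1 x2 y1 y2, 0 <= x1 -> x1 <= x2 -> 0 <= y1 -> y1 <= y2 ->
         0 <= F x2 y2 - F x2 y1 - F x1 y2 + F x1 y1),
      (forall x y, 0 <= x -> 0 <= y -> F x y <= Num.min x y) &
      (forall x1 y1 x2 y2, 0 <= x1 -> 0 <= y1 -> 0 <= x2 -> 0 <= y2 ->
         `|F x1 y1 - F x2 y2| <= `|x1 - x2| + `|y1 - y2|)].

Definition unit_I (u : R) : Prop := 0 <= u <= 1.

Definition copula2 (C : R -> R -> R) : Prop :=
  [/\ (forall u v, unit_I u -> unit_I v -> unit_I (C u v)),
      (forall u, unit_I u -> C u 0 = 0 /\ C 0 u = 0),
      (forall u, unit_I u -> C u 1 = u /\ C 1 u = u) &
      (forall u1 u2 v1 v2, unit_I u1 -> unit_I u2 -> unit_I v1 -> unit_I v2 ->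
         u1 <= u2 -> v1 <= v2 ->
         0 <= C u2 v2 - C u2 v1 - C u1 v2 + C u1 v1)].

Definition tail_dependence2 (F : R -> R -> R) : Prop :=
  exists C, copula2 C /\
    forall x y, 0 <= x -> 0 <= y ->
      (fun s => C (s * x) (s * y) / s) @ 0^'+ --> F x y.

End Defs.

From HB Require Import structures.
From mathcomp Require Import all_boot all_order all_algebra.
From mathcomp Require Import all_classical all_reals all_analysis.
From mathcomp Require Import measurable_realfun ring lra.
Set Implicit Arguments. Unset Strict Implicit. Unset Printing Implicit Defensive.
Import Order.TTheory GRing.Theory Num.Theory.
Import numFieldNormedType.Exports.
Local Open Scope classical_set_scope.
Local Open Scope ring_scope.

(* For y >= 0 the function T 1_[0,y] takes values in [0,1] a.e. and has
   L^1-norm at most y; by linearity T 1_[0,y2] - T 1_[0,y1] = T 1_]y1,y2] a.e.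
   is of the same kind with mass y2 - y1.  Integrating over [0,x] gives the
   bounds, the Lipschitz property and 2-increasingness of F_T, the rectangle
   increment being the integral of T 1_]y1,y2] over ]x1,x2].  Equivariance and
   the substitution t = s u give F_T (s x) (s y) = s F_T x y.  A homogeneous
   subdistribution function F is the tail dependence function of
     C u v = F u v + (u - F u 1) (v - F 1 v) / (1 - F 1 1):
   the correction is a product of nondecreasing functions, so C stays
   2-increasing, it makes the margins uniform, and it is O(s^2) at (s x, s y),
   so it disappears from the limit of C (s x) (s y) / s. *)

Section Lebesgue.
Variable R : realType.
Local Notation mu := (@lebesgue_measure R).

Lemma aeS (P Q : R -> Prop) : (forall x, P x -> Q x) ->
  {ae mu, forall x, P x} -> {ae mu, forall x, Q x}.
Proof. exact: (@filterS _ _ (ae_filter_ringOfSetsType mu)). Qed.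

Lemma measurable_Rnonneg : measurable (@Rnonneg R).
Proof.
have -> : @Rnonneg R = `[0, +oo[%classic.
  by apply/seteqP; split => x; rewrite /Rnonneg /= in_itv /= andbT.
exact: measurable_itv.
Qed.

Lemma lebesgue_measure_itvcc (a b : R) : a <= b -> mu `[a, b] = (b - a)%:E.
Proof.
move=> ab; rewrite lebesgue_measure_itv /= lte_fin.
have [_|ba] := ltP a b; first by rewrite EFinB.
have -> : b = a by apply/eqP; rewrite eq_le ab ba.
by rewrite subrr.
Qed.

Lemma lebesgue_measure_itvoc (a b : R) : a <= b -> mu `]a, b] = (b - a)%:E.
Proof.
move=> ab; rewrite lebesgue_measure_itv /= lte_fin.
have [_|ba] := ltP a b; first by rewrite EFinB.
have -> : b = a by apply/eqP; rewrite eq_le ab ba.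
by rewrite subrr.
Qed.

Lemma preimage_dilation_itvcc (s a b : R) : 0 < s ->
  (fun t => t / s) @^-1` `[a, b] = `[s * a, s * b]%classic.
Proof.
move=> s0; apply/seteqP; split => t /=; rewrite !in_itv /=;
  by rewrite ler_pdivlMr // ler_pdivrMr // ![s * _]mulrC.
Qed.

Lemma lebesgue_measure_dilation (s : R) (A : set R) : 0 < s -> measurable A ->
  mu ((fun t => t / s) @^-1` A) = (s%:E * mu A)%E.
Proof.
move=> s0 mA.
have k0 : 0 <= s^-1 by rewrite invr_ge0 ltW.
pose k : {nonneg R} := NngNum k0.
pose phi : measurableTypeR R -> measurableTypeR R := fun t => t / s.
have mphi : measurable_fun setT phi by exact: mulrr_measurable.
have /(_ mphi) := @lebesgue_measure_unique R (mscale k (pushforward mu phi)).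
move=> /(_ _) /(_ A mA) /= ->; first by rewrite muleA -EFinM divff ?gt_eqF // mul1e.
move=> _ [[a b] _ <-] /=.
transitivity (k%:num%:E * mu (phi @^-1` `]a, b]))%E; last by [].
have -> : phi @^-1` `]a, b] = `]s * a, s * b]%classic.
  apply/seteqP; split => t /=; rewrite !in_itv /=;
    by rewrite ltr_pdivlMr // ler_pdivrMr // ![s * _]mulrC.
rewrite !lebesgue_measure_itv /= !lte_fin ltr_pM2l //.
case: ifPn => _; last by rewrite mule0.
by rewrite -!EFinD -EFinM; congr (_%:E); field; rewrite gt_eqF.
Qed.

Lemma ge0_integral_dilation (s : R) (D : set R) (h : R -> \bar R) :
  0 < s -> measurable D -> measurable_fun D h -> (forall y, D y -> 0 <= h y)%E ->
  (\int[mu]_(t in (fun t => (t / s)%R) @^-1` D) h (t / s)%R =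
   s%:E * \int[mu]_(y in D) h y)%E.
Proof.
move=> s0 mD mh h0.
pose phi : measurableTypeR R -> measurableTypeR R := fun t => t / s.
have mphi : measurable_fun setT phi by exact: mulrr_measurable.
rewrite -(ge0_integral_pushforward mphi) //; last by move=> y /set_mem/h0.
pose k : {nonneg R} := NngNum (ltW s0).
rewrite (@eq_measure_integral _ _ _ _ (mscale k mu)) ?ge0_integral_mscale //.
by move=> A mA _; apply: lebesgue_measure_dilation.
Qed.

Lemma Rintegral_dilation (s : R) (D : set R) (g : R -> R) :
  0 < s -> measurable D -> mu.-integrable D (EFin \o g) ->
  Rintegral mu ((fun t => t / s) @^-1` D) (fun t => g (t / s)) =
  s * Rintegral mu D g.
Proof.
move=> s0 mD ig; have mg := measurable_int mu ig.
have posE := ge0_integral_dilation s0 mD (measurable_funepos mg) (fun y _ => funepos_ge0 _ y).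
have negE := ge0_integral_dilation s0 mD (measurable_funeneg mg) (fun y _ => funeneg_ge0 _ y).
have posF : (\int[mu]_(y in D) (EFin \o g)^\+ y)%E \is a fin_num.
  by apply: integrable_fin_num => //; exact: integrable_funepos.
have negF : (\int[mu]_(y in D) (EFin \o g)^\- y)%E \is a fin_num.
  by apply: integrable_fin_num => //; exact: integrable_funeneg.
rewrite /Rintegral integralE [in RHS]integralE.
rewrite (funepos_comp (EFin \o g)) (funeneg_comp (EFin \o g)) posE negE.
rewrite -muleBr ?fin_num_adde_defl //; last by rewrite fin_numN.
by rewrite (@fineM _ s%:E) // fin_numB posF negF.
Qed.

Lemma subset_itvcc_Rnonneg (a b : R) : 0 <= a -> `[a, b] `<=` @Rnonneg R.
Proof.
by move=> a0 t; rewrite /= in_itv /= => /andP[ta _]; rewrite /Rnonneg /= (le_trans a0).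
Qed.

Lemma subset_itvoc_Rnonneg (a b : R) : 0 <= a -> `]a, b] `<=` @Rnonneg R.
Proof.
by move=> a0 t; rewrite /= in_itv /= => /andP[ta _]; rewrite /Rnonneg /= ltW ?(le_lt_trans a0).
Qed.

Section L1_on_subsets.
Variables (f : R -> R) (B : set R).
Hypotheses (mB : measurable B) (BR : B `<=` @Rnonneg R).

Lemma inL1_integrable : inL1 f -> mu.-integrable B (EFin \o f).
Proof. by case=> _ fi; apply: integrableS fi => //; exact: measurable_Rnonneg. Qed.

Lemma inL1_Rintegral_le_L1norm : inL1 f -> Rintegral mu B f <= fine (L1norm f).
Proof.
move=> fL1; have [mf /integrableP[_ fint]] := fL1.
have absf_ge0 D : (0 <= \int[mu]_(x in D) `|(f x)%:E|)%E by exact: integral_ge0.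
have le_sub : (\int[mu]_(x in B) `|(f x)%:E| <= L1norm f)%E.
  apply: ge0_subset_integral => //; first exact: measurable_Rnonneg.
  by apply: measurableT_comp => //; apply/measurable_EFinP.
rewrite (le_trans (ler_norm _)) // (le_trans (le_normr_Rintegral _ _)) //;
  first exact: inL1_integrable.
apply: fine_le (le_sub); rewrite ge0_fin_numE //.
- exact: le_lt_trans le_sub fint.
- exact: absf_ge0.
Qed.

Lemma ae_ge0_Rintegral : measurable_fun B f ->
  {ae mu, forall x, Rnonneg x -> 0 <= f x} -> 0 <= Rintegral mu B f.
Proof.
move=> mf f_ge0; apply: fine_ge0.
rewrite (@ae_eq_integral _ _ _ mu B (fun x => `|(f x)%:E|)%E) //.
- by apply: integral_ge0 => x _; exact: abse_ge0.
- exact/measurable_EFinP.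
- by apply: measurableT_comp => //; exact/measurable_EFinP.
- by apply: aeS f_ge0 => x fx0 /BR/fx0 fx_ge0 /=; rewrite ger0_norm.
Qed.

Lemma ae_bounded_Rintegral M : inL1 f -> (mu B < +oo)%E -> 0 <= M ->
  ae_bounded_by f M -> Rintegral mu B f <= M * fine (mu B).
Proof.
move=> fL1 muBfin M0 fM; have [mf _] := fL1.
have /integrableP[_ fint] := inL1_integrable fL1.
have muB_fin : mu B \is a fin_num by rewrite ge0_fin_numE.
rewrite (le_trans (ler_norm _)) // (le_trans (le_normr_Rintegral _ _)) //;
  first exact: inL1_integrable.
rewrite -[M]/(fine M%:E) -(@fineM _ M%:E) // -integral_cst //; apply: fine_le.
- by rewrite ge0_fin_numE // integral_ge0.
- by rewrite integral_cst // fin_numM.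
apply: ae_ge0_le_integral => //.
- by do 2 apply: measurableT_comp => //; exact: measurable_funS measurable_Rnonneg BR mf.
- by apply: aeS fM => x fxM /BR/fxM; rewrite lee_fin.
Qed.

Lemma aeeq_Rintegral g : measurable_fun B f -> measurable_fun B g ->
  aeeq f g -> Rintegral mu B f = Rintegral mu B g.
Proof.
move=> mf mg fg; congr fine; apply: ae_eq_integral => //.
- exact/measurable_EFinP.
- exact/measurable_EFinP.
- by apply: aeS fg => x fgx /BR/fgx /= ->.
Qed.

End L1_on_subsets.

Definition subdensity (f : R -> R) (m : R) : Prop :=
  [/\ inL1 f, {ae mu, forall x, Rnonneg x -> 0 <= f x}, ae_bounded_by f 1
    & (L1norm f <= m%:E)%E].

Section Subdensity.
Variables (f : R -> R) (m : R).
Hypothesis fm : subdensity f m.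

Lemma subdensity_Rintegral_ge0 (B : set R) : measurable B -> B `<=` @Rnonneg R ->
  0 <= Rintegral mu B f.
Proof.
have [[mf _] f_ge0 _ _] := fm => mB BR.
by apply: ae_ge0_Rintegral => //; exact: measurable_funS measurable_Rnonneg BR mf.
Qed.

Lemma subdensity_Rintegral_le_measure (B : set R) : measurable B -> B `<=` @Rnonneg R ->
  (mu B < +oo)%E -> Rintegral mu B f <= fine (mu B).
Proof.
have [fL1 _ f_le1 _] := fm => mB BR muBfin.
by rewrite -[leRHS]mul1r; exact: ae_bounded_Rintegral.
Qed.

Lemma subdensity_Rintegral_le_mass (B : set R) : measurable B -> B `<=` @Rnonneg R ->
  Rintegral mu B f <= m.
Proof.
have [fL1 _ _ fL1m] := fm => mB BR.
rewrite (le_trans (inL1_Rintegral_le_L1norm _ _ fL1)) //.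
rewrite -lee_fin fineK // ge0_fin_numE ?(le_lt_trans fL1m) ?ltry //.
exact: integral_ge0.
Qed.

Lemma subdensity_primitive_bounds x : 0 <= x ->
  0 <= Rintegral mu `[0, x] f <= Num.min x m.
Proof.
move=> x0; have IR := @subset_itvcc_Rnonneg 0 x (lexx 0).
rewrite subdensity_Rintegral_ge0 // le_min subdensity_Rintegral_le_mass // andbT.
have := subdensity_Rintegral_le_measure (measurable_itv _) IR.
by rewrite lebesgue_measure_itvcc // subr0; apply; exact: ltry.
Qed.

Lemma subdensity_primitive_incr a b : 0 <= a -> a <= b ->
  0 <= Rintegral mu `[0, b] f - Rintegral mu `[0, a] f <= b - a.
Proof.
move=> a0 ab; have [fL1 _ _ _] := fm.
have IR := @subset_itvoc_Rnonneg a b a0.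
rewrite (@Rintegral_itvB _ f (BLeft 0) (BRight b) a) ?bnd_simp //; last first.
  by apply: inL1_integrable => //; exact: subset_itvcc_Rnonneg.
rewrite subdensity_Rintegral_ge0 //=.
have := subdensity_Rintegral_le_measure (measurable_itv _) IR.
by rewrite lebesgue_measure_itvoc //; apply; exact: ltry.
Qed.

End Subdensity.

Lemma in_set_itv (i : interval R) (t : R) : (t \in [set` i]) = (t \in i).
Proof. by apply/idP/idP => [/set_mem|/mem_set]. Qed.

Lemma indic_itvocB (y1 y2 : R) : 0 <= y1 -> y1 <= y2 ->
  \1_`]y1, y2] = \1_`[0, y2] \- \1_`[0, y1] :> (R -> R).
Proof.
move=> y10 y12; apply/funext => t; rewrite /= !indicE !in_set_itv !in_itv /=.
have [t0|t0] := leP 0 t; have [ty1|ty1] := leP t y1; have [ty2|ty2] := leP t y2;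
  rewrite /= ?subrr ?subr0 //; lra.
Qed.

Lemma indic_itvcc_dilation (s y : R) : 0 < s ->
  (fun t => \1_`[0, y] (t / s)) = \1_`[0, s * y] :> (R -> R).
Proof. by move=> s0; rewrite -[in RHS](mulr0 s) -preimage_dilation_itvcc. Qed.

Section Indicator.
Variable A : set R.
Hypotheses (mA : measurable A) (AR : A `<=` @Rnonneg R).

Lemma L1norm_indic : L1norm \1_A = mu A.
Proof.
rewrite /L1norm -[in RHS](setIidl AR) -integral_indic //; last exact: measurable_Rnonneg.
by apply: eq_integral => x _; rewrite ger0_norm // indicE ler0n.
Qed.

Lemma ae_bounded_indic : ae_bounded_by \1_A 1.
Proof. by apply: aeW => x _; rewrite indicE; case: (x \in A); rewrite ?normr1 ?normr0. Qed.

Lemma inLinf_indic : inLinf \1_A.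
Proof. by split; [exact: measurable_indic | exists 1; exact: ae_bounded_indic]. Qed.

Lemma inL1_indic : (mu A < +oo)%E -> inL1 \1_A.
Proof.
move=> muAfin; split; first exact: measurable_indic.
apply/integrableP; split; first exact/measurable_EFinP/measurable_indic.
by rewrite -/(L1norm _) L1norm_indic.
Qed.

Lemma inL1Linf_indic : (mu A < +oo)%E -> inL1Linf \1_A.
Proof.
move=> muAfin; split; first exact: measurable_indic.
exists \1_A, (cst 0); split; first exact: inL1_indic.
- by split; [exact: measurable_cst | exists 0; apply: aeW => x _; rewrite normr0].
- by apply: aeW => x _; rewrite /= addr0.
Qed.

End Indicator.

Lemma inL1Linf_indic_itvcc (y : R) : 0 <= y -> inL1Linf \1_`[0, y].
Proof.
move=> y0; apply: inL1Linf_indic; first exact: measurable_itv.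
- exact: subset_itvcc_Rnonneg.
- by rewrite lebesgue_measure_itvcc // ltry.
Qed.

Lemma dist_le_of_increments (g : R -> R) (u v : R) :
  (forall a b, 0 <= a -> a <= b -> 0 <= g b - g a <= b - a) ->
  0 <= u -> 0 <= v -> `|g u - g v| <= `|u - v|.
Proof.
move=> incr u0 v0; wlog uv : u v u0 v0 / u <= v.
  move=> wl; have [|/ltW vu] := leP u v; first exact: wl.
  by rewrite distrC (distrC u); exact: wl.
have /andP[gvu_ge0 gvu_le] := incr u v u0 uv.
by rewrite distrC ger0_norm // distrC ger0_norm // subr_ge0.
Qed.

Definition homogeneous2 (F : R -> R -> R) : Prop :=
  forall s x y, 0 < s -> 0 <= x -> 0 <= y -> F (s * x) (s * y) = s * F x y.

Section DoublySubstochastic.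
Variable T : (R -> R) -> (R -> R).
Hypothesis hT : doubly_substochastic T.

Lemma subdensity_T_indic (A : set R) (m : R) : measurable A -> A `<=` @Rnonneg R ->
  (mu A <= m%:E)%E -> subdensity (T \1_A) m.
Proof.
move=> mA AR muAm; have muAfin := le_lt_trans muAm (ltry m).
have [_ [_ [_ [Tpos [[TL1 _] [[TL1norm TLinf] _]]]]]] := hT.
split.
- exact/TL1/inL1_indic.
- by apply: Tpos; [exact: inL1Linf_indic | apply: aeW => x _; rewrite indicE ler0n].
- by apply: TLinf; [exact: inLinf_indic | exact: ae_bounded_indic].
- by rewrite (le_trans (TL1norm _ (inL1_indic mA AR muAfin))) // L1norm_indic.
Qed.

Lemma subdensity_T_indic_itvcc (y : R) : 0 <= y -> subdensity (T \1_`[0, y]) y.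
Proof.
move=> y0; apply: subdensity_T_indic; first exact: measurable_itv.
- exact: subset_itvcc_Rnonneg.
- by rewrite lebesgue_measure_itvcc // subr0.
Qed.

Lemma subdensity_T_indic_itvoc (y1 y2 : R) : 0 <= y1 -> y1 <= y2 ->
  subdensity (T \1_`]y1, y2]) (y2 - y1).
Proof.
move=> y10 y12; apply: subdensity_T_indic; first exact: measurable_itv.
- exact: subset_itvoc_Rnonneg.
- by rewrite lebesgue_measure_itvoc.
Qed.

Lemma F_T_itvoc (x y1 y2 : R) : 0 <= x -> 0 <= y1 -> y1 <= y2 ->
  F_T T x y2 - F_T T x y1 = Rintegral mu `[0, x] (T \1_`]y1, y2]).
Proof.
move=> x0 y10 y12; have y20 := le_trans y10 y12.
have [[mTy1 iTy1] _ _ _] := subdensity_T_indic_itvcc y10.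
have [[mTy2 iTy2] _ _ _] := subdensity_T_indic_itvcc y20.
have [[mTy12 _] _ _ _] := subdensity_T_indic_itvoc y10 y12.
have IR := @subset_itvcc_Rnonneg 0 x (lexx 0).
have [_ [_ [Tlin _]]] := hT.
have := Tlin _ _ 1 (-1) (inL1Linf_indic_itvcc y20) (inL1Linf_indic_itvcc y10).
rewrite (_ : (fun x => _) = \1_`]y1, y2]); last first.
  by rewrite indic_itvocB //; apply/funext => t /=; rewrite mul1r mulN1r.
move=> TB; rewrite /F_T -RintegralB; [|exact: measurable_itv|exact: inL1_integrable..].
symmetry; apply: aeeq_Rintegral => //.
- exact: (measurable_funS measurable_Rnonneg IR mTy12).
- by apply: measurable_funB; exact: measurable_funS measurable_Rnonneg IR _.
- by apply: aeS TB => t TBt /TBt ->; rewrite mul1r mulN1r.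
Qed.

Lemma F_T_bounds (x y : R) : 0 <= x -> 0 <= y -> 0 <= F_T T x y <= Num.min x y.
Proof. by move=> x0 y0; exact/subdensity_primitive_bounds/x0/subdensity_T_indic_itvcc. Qed.

Lemma F_T_incr_l (a b y : R) : 0 <= a -> a <= b -> 0 <= y ->
  0 <= F_T T b y - F_T T a y <= b - a.
Proof. by move=> a0 ab y0; exact/subdensity_primitive_incr/ab/a0/subdensity_T_indic_itvcc. Qed.

Lemma F_T_incr_r (x a b : R) : 0 <= x -> 0 <= a -> a <= b ->
  0 <= F_T T x b - F_T T x a <= b - a.
Proof.
move=> x0 a0 ab; rewrite F_T_itvoc //.
have /andP[-> ] := subdensity_primitive_bounds (subdensity_T_indic_itvoc a0 ab) x0.
by rewrite le_min => /andP[].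
Qed.

Lemma F_T_2increasing (x1 x2 y1 y2 : R) : 0 <= x1 -> x1 <= x2 -> 0 <= y1 -> y1 <= y2 ->
  0 <= F_T T x2 y2 - F_T T x2 y1 - F_T T x1 y2 + F_T T x1 y1.
Proof.
move=> x10 x12 y10 y12; have x20 := le_trans x10 x12.
have /andP[+ _] := subdensity_primitive_incr (subdensity_T_indic_itvoc y10 y12) x10 x12.
by rewrite -(F_T_itvoc x20 y10 y12) -(F_T_itvoc x10 y10 y12) opprB addrA addrAC.
Qed.

Lemma subdistribution_F_T : subdistribution2 (F_T T).
Proof.
split.
- by move=> x y x0 y0; have /andP[] := F_T_bounds x0 y0.
- exact: F_T_2increasing.
- by move=> x y x0 y0; have /andP[] := F_T_bounds x0 y0.
move=> x1 y1 x2 y2 x10 y10 x20 y20.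
rewrite (le_trans (ler_distD (F_T T x2 y1) _ _)) // lerD //.
- by apply: (@dist_le_of_increments (F_T T ^~ y1)) => // a b a0 ab; exact: F_T_incr_l.
- by apply: (@dist_le_of_increments (F_T T x2)) => // a b a0 ab; exact: F_T_incr_r.
Qed.

Lemma homogeneous_F_T : equivariant T -> homogeneous2 (F_T T).
Proof.
move=> eqT s x y s0 x0 y0; have sy0 : 0 <= s * y by rewrite mulr_ge0 // ltW.
have [[mTy TyL1] _ _ _] := subdensity_T_indic_itvcc y0.
have [[mTsy _] _ _ _] := subdensity_T_indic_itvcc sy0.
have IR := @subset_itvcc_Rnonneg 0 (s * x) (lexx 0).
have dilIR : (fun t => t / s) @` `[0, s * x] `<=` @Rnonneg R.
  by move=> _ [t /IR t0 <-]; rewrite /Rnonneg /= divr_ge0 // ltW.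
rewrite /F_T -indic_itvcc_dilation //.
rewrite (@aeeq_Rintegral _ _ _ IR (fun t => T \1_`[0, y] (t / s))) //.
- rewrite (_ : `[0, s * x]%classic = (fun t => t / s) @^-1` `[0, x]); last first.
    by rewrite preimage_dilation_itvcc // mulr0.
  rewrite Rintegral_dilation //; apply: inL1_integrable; last by split.
  - exact: measurable_itv.
  - exact: subset_itvcc_Rnonneg.
- rewrite indic_itvcc_dilation //; exact: measurable_funS measurable_Rnonneg IR mTsy.
- apply: measurable_comp dilIR mTy _ => //; first exact: measurable_Rnonneg.
  exact: mulrr_measurable.
- exact/eqT/inL1Linf_indic_itvcc.
Qed.

End DoublySubstochastic.

End Lebesgue.

Section TailCopula.
Variable R : realType.

(* When F 1 1 = 1 the margin defects u - F u 1 and v - F 1 v vanish on [0, 1],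
   so the junk value of the division by 0 is harmless. *)
Definition tail_copula (F : R -> R -> R) (u v : R) : R :=
  F u v + (u - F u 1) * (v - F 1 v) / (1 - F 1 1).

Variable F : R -> R -> R.
Hypothesis Fsub : subdistribution2 F.

Lemma subdistribution_ge0 x y : 0 <= x -> 0 <= y -> 0 <= F x y.
Proof. by case: Fsub => F_ge0 _ _ _; exact: F_ge0. Qed.

Lemma subdistribution_le_l x y : 0 <= x -> 0 <= y -> F x y <= x.
Proof.
by case: Fsub => _ _ Fmin _ x0 y0; have := Fmin x y x0 y0; rewrite le_min => /andP[].
Qed.

Lemma subdistribution_le_r x y : 0 <= x -> 0 <= y -> F x y <= y.
Proof.
by case: Fsub => _ _ Fmin _ x0 y0; have := Fmin x y x0 y0; rewrite le_min => /andP[].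
Qed.

Lemma subdistribution_x0 x : 0 <= x -> F x 0 = 0.
Proof.
by move=> x0; apply/eqP; rewrite eq_le subdistribution_le_r ?subdistribution_ge0.
Qed.

Lemma subdistribution_0y y : 0 <= y -> F 0 y = 0.
Proof.
by move=> y0; apply/eqP; rewrite eq_le subdistribution_le_l ?subdistribution_ge0.
Qed.

Lemma subdistribution_incr_l x1 x2 y : 0 <= x1 -> x1 <= x2 -> 0 <= y ->
  F x2 y - F x1 y <= x2 - x1.
Proof.
case: Fsub => _ _ _ Flip x10 x12 y0; have x20 := le_trans x10 x12.
have := Flip x2 y x1 y x20 y0 x10 y0.
rewrite subrr normr0 addr0 [`|x2 - x1|]ger0_norm ?subr_ge0 //.
exact: le_trans (ler_norm _).
Qed.

Lemma subdistribution_incr_r x y1 y2 : 0 <= x -> 0 <= y1 -> y1 <= y2 ->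
  F x y2 - F x y1 <= y2 - y1.
Proof.
case: Fsub => _ _ _ Flip x0 y10 y12; have y20 := le_trans y10 y12.
have := Flip x y2 x y1 x0 y20 x0 y10.
rewrite subrr normr0 add0r [`|y2 - y1|]ger0_norm ?subr_ge0 //.
exact: le_trans (ler_norm _).
Qed.

Lemma margin_defect_l_ge0 u : 0 <= u -> 0 <= u - F u 1.
Proof. by move=> u0; rewrite subr_ge0 subdistribution_le_l. Qed.

Lemma margin_defect_r_ge0 v : 0 <= v -> 0 <= v - F 1 v.
Proof. by move=> v0; rewrite subr_ge0 subdistribution_le_r. Qed.

Lemma margin_defect_l_nondecr u1 u2 : 0 <= u1 -> u1 <= u2 -> u1 - F u1 1 <= u2 - F u2 1.
Proof. by move=> u10 u12; have := subdistribution_incr_l u10 u12 ler01; lra. Qed.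

Lemma margin_defect_r_nondecr v1 v2 : 0 <= v1 -> v1 <= v2 -> v1 - F 1 v1 <= v2 - F 1 v2.
Proof. by move=> v10 v12; have := subdistribution_incr_r ler01 v10 v12; lra. Qed.

Lemma tail_copula_2increasing u1 u2 v1 v2 : 0 <= u1 -> u1 <= u2 -> 0 <= v1 -> v1 <= v2 ->
  0 <= tail_copula F u2 v2 - tail_copula F u2 v1 - tail_copula F u1 v2 + tail_copula F u1 v1.
Proof.
move=> u10 u12 v10 v12; case: (Fsub) => _ F2 _ _.
have -> : tail_copula F u2 v2 - tail_copula F u2 v1 - tail_copula F u1 v2 + tail_copula F u1 v1
  = (F u2 v2 - F u2 v1 - F u1 v2 + F u1 v1) +
    ((u2 - F u2 1) - (u1 - F u1 1)) * ((v2 - F 1 v2) - (v1 - F 1 v1)) / (1 - F 1 1).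
  by rewrite /tail_copula; ring.
rewrite addr_ge0 ?F2 // mulr_ge0 ?invr_ge0 ?margin_defect_l_ge0 // mulr_ge0 // subr_ge0.
- exact: margin_defect_l_nondecr.
- exact: margin_defect_r_nondecr.
Qed.

Lemma tail_copula_x0 u : 0 <= u -> tail_copula F u 0 = 0.
Proof.
by move=> u0; rewrite /tail_copula !subdistribution_x0 ?ler01 // subrr mulr0 mul0r addr0.
Qed.

Lemma tail_copula_0y v : 0 <= v -> tail_copula F 0 v = 0.
Proof.
by move=> v0; rewrite /tail_copula !subdistribution_0y ?ler01 // subrr !mul0r addr0.
Qed.

Lemma tail_copula_x1 u : unit_I u -> tail_copula F u 1 = u.
Proof.
move=> /andP[u0 u1]; rewrite /tail_copula.
have [d0|d_neq0] := eqVneq (1 - F 1 1) 0; last by rewrite mulfK //; ring.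
have : u - F u 1 <= 1 - F 1 1 by exact: margin_defect_l_nondecr.
by rewrite d0 invr0 mulr0 addr0; have := margin_defect_l_ge0 u0; lra.
Qed.

Lemma tail_copula_1y v : unit_I v -> tail_copula F 1 v = v.
Proof.
move=> /andP[v0 v1]; rewrite /tail_copula.
have [d0|d_neq0] := eqVneq (1 - F 1 1) 0; last by rewrite mulrAC mulfV // mul1r; ring.
have : v - F 1 v <= 1 - F 1 1 by exact: margin_defect_r_nondecr.
by rewrite d0 invr0 mulr0 addr0; have := margin_defect_r_ge0 v0; lra.
Qed.

Lemma copula2_tail_copula : copula2 (tail_copula F).
Proof.
split.
- move=> u v /[dup] Iu /andP[u0 u1] /[dup] Iv /andP[v0 v1]; apply/andP; split.
    by rewrite addr_ge0 ?subdistribution_ge0 // !mulr_ge0 ?invr_ge0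
      ?margin_defect_l_ge0 ?margin_defect_r_ge0 ?subdistribution_le_l ?subr_ge0.
  have := tail_copula_2increasing (lexx 0) u0 v0 v1.
  rewrite tail_copula_x1 // tail_copula_0y // tail_copula_0y //; lra.
- by move=> u /andP[u0 _]; rewrite tail_copula_x0 // tail_copula_0y.
- by move=> u Iu; rewrite tail_copula_x1 // tail_copula_1y.
- by move=> u1 u2 v1 v2 /andP[u10 _] _ /andP[v10 _] _ u12 v12; exact: tail_copula_2increasing.
Qed.

Lemma tail_copula_cvg x y : homogeneous2 F -> 0 <= x -> 0 <= y ->
  (fun s => tail_copula F (s * x) (s * y) / s) @ 0^'+ --> F x y.
Proof.
move=> Fhom x0 y0; pose K := x * y / (1 - F 1 1).
apply: (@squeeze_cvgr _ _ _ _ (cst (F x y)) (fun s => F x y + s * K)); last 2 first.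
- exact: cvg_cst.
- apply: cvg_at_right_filter.
  rewrite -[X in _ --> X]addr0 -[X in _ --> _ + X](mul0r K).
  by apply: cvgD; [exact: cvg_cst | apply: cvgM; [exact: cvg_id | exact: cvg_cst]].
near=> s; have s0 : 0 < s by near: s; exact: nbhs_right_gt.
have sx0 : 0 <= s * x by rewrite mulr_ge0 // ltW.
have sy0 : 0 <= s * y by rewrite mulr_ge0 // ltW.
rewrite /tail_copula mulrDl Fhom // mulrAC divff ?gt_eqF // mul1r lerDl lerD2l.
rewrite !mulr_ge0 ?invr_ge0 ?margin_defect_l_ge0 ?margin_defect_r_ge0 ?(ltW s0) //=.
apply: (@le_trans _ _ (s * x * (s * y) / (1 - F 1 1) / s)).
  rewrite ler_wpM2r ?invr_ge0 ?(ltW s0) // ler_wpM2r ?invr_ge0 //.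
    by rewrite subr_ge0 subdistribution_le_l.
  rewrite ler_pM ?margin_defect_l_ge0 ?margin_defect_r_ge0 //;
    by rewrite lerBlDr lerDl subdistribution_ge0.
have -> : s * x * (s * y) / (1 - F 1 1) / s = s * K * (s / s) by rewrite /K; ring.
by rewrite divff ?gt_eqF // mulr1.
Unshelve. all: by end_near.
Qed.

Lemma tail_dependence2_of_homogeneous : homogeneous2 F -> tail_dependence2 F.
Proof.
move=> Fhom; exists (tail_copula F); split; first exact: copula2_tail_copula.
by move=> x y x0 y0; exact: tail_copula_cvg.
Qed.

End TailCopula.

Unset Implicit Arguments.

Theorem mainTheorem14 (R : realType) (T : (R -> R) -> (R -> R)) :
  doubly_substochastic T ->
  subdistribution2 (F_T T) /\ (equivariant T -> tail_dependence2 (F_T T)).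
Proof.
move=> hT; have F_T_sub := subdistribution_F_T hT; split => // eqT.
exact/(tail_dependence2_of_homogeneous F_T_sub)/(homogeneous_F_T hT).
Qed.
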